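(* In the setting described in the context, assume $x_h^2\beta>3$ and $n>\max\{\frac1{2\alpha x_h^2\beta}-\frac1{x_h^2\beta},\ \frac\alpha{x_h^2\beta},\ \frac\alpha{x_h^2\beta}(e^{\frac2{x_h^2\beta}}-2)+\frac1{2x_h^2\beta}\}$, and let $\dot k=\frac1{2n}\log_\lambda\Big(\frac1{1+\frac1{\alpha\eta}(1-\lambda^2)}\Big)-1$. Then for every $r\in\{1,\dots,n\}$, $$\frac{(\mu_{\lceil\dot k\rceil n+n}-\hat\mu^r_{\lceil\dot k\rceil n+n})^2}{(\hat\sigma^r_{\lceil\dot k\rceil n+n})^2}\ge e^{-\frac2{x_h^2\beta}}\frac\alpha{v_1}\Big(\frac3{32x_h^2\beta}\Big)^2\Big(\frac cn\Big)^2,\qquad v_1=\max\{6,1+2e^{\frac1{x_h^2\beta}}\}.$$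
   Context: Fix $\alpha,\beta,x_h,c>0$ and an integer $n\ge2$. Model: $y=\theta x+\xi$, $\xi\sim\mathcal N(0,\beta^{-1})$, prior $\theta\sim\mathcal N(0,\alpha^{-1})$. Databases: $D_1$ consists of $n$ copies of $(x_h,cx_h)$; $D_2$ consists of $n-1$ copies of $(x_h,cx_h)$ and one copy of $(x_h/2,cx_h/2)$. Cyclic SGLD with batch size 1 and step size $\eta=\frac2{(\alpha+nx_h^2\beta)^2}$: $\theta_0\sim\mathcal N(0,\alpha^{-1})$, $\theta_{j+1}=\theta_j+\frac\eta2[-\alpha\theta_j+n\beta(y_{i_j}-\theta_jx_{i_j})x_{i_j}]+\sqrt\eta\,\xi_j$ with $\xi_j\sim\mathcal N(0,1)$ i.i.d. independent of $\theta_0$; the database is shuffled once uniformly and its samples are then used cyclically. On $D_1$ the $j$-th iterate is $\mathcal N(\mu_j,\sigma_j^2)$. On $D_2$ let $r\in\{1,\dots,n\}$ be the position within each epoch at which $(x_h/2,cx_h/2)$ is used; conditionally on $r$ the $j$-th iterate is $\hat\theta^r_j\sim\mathcal N(\hat\mu^r_j,(\hat\sigma^r_j)^2)$. Set $\lambda=1-\frac\eta2(\alpha+nx_h^2\beta)$, $\hat\lambda=1-\frac\eta2(\alpha+n\frac{x_h^2}4\beta)$. *)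

From HB Require Import structures.
From mathcomp Require Import all_boot all_order all_algebra.
From mathcomp Require Import boolp classical_sets reals sequences exp.
Set Implicit Arguments. Unset Strict Implicit. Unset Printing Implicit Defensive.
Import Order.TTheory GRing.Theory Num.Theory.
Local Open Scope ring_scope.

Definition sgld_eta {R : realType} (alpha beta xh : R) (n : nat) : R :=
  2 / (alpha + n%:R * xh ^+ 2 * beta) ^+ 2.

(* Mean and variance of the j-th (Gaussian) SGLD iterate when step j uses the
   sample data j = (x_{i_j}, y_{i_j}).  From
     theta_{j+1} = theta_j + eta/2 [-alpha theta_j + n beta (y - theta_j x) x]
                   + sqrt eta xi_j,
   with theta_0 ~ N(0, 1/alpha) and xi_j ~ N(0,1) independent of theta_j:
     mu_{j+1}      = mu_j + eta/2 [-alpha mu_j + n beta (y - mu_j x) x]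
     sigma^2_{j+1} = (1 - eta/2 (alpha + n beta x^2))^2 sigma^2_j + eta. *)
Fixpoint sgld_mv {R : realType} (alpha beta eta : R) (n : nat)
    (data : nat -> R * R) (j : nat) : R * R :=
  match j with
  | 0 => (0, alpha^-1)
  | j'.+1 =>
      let mv := sgld_mv alpha beta eta n data j' in
      let x := (data j').1 in
      let y := (data j').2 in
      (mv.1 + eta / 2 * (- alpha * mv.1 + n%:R * beta * (y - mv.1 * x) * x),
       (1 - eta / 2 * (alpha + n%:R * beta * x ^+ 2)) ^+ 2 * mv.2 + eta)
  end.

(* D1: every step uses (x_h, c x_h) (shuffling is irrelevant). *)
Definition data_D1 {R : realType} (xh c : R) : nat -> R * R :=
  fun _ => (xh, c * xh).

(* D2, conditionally on r in {1..n}: step j (0-based) is at position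
   (j mod n) + 1 of its epoch; it uses (x_h/2, c x_h/2) iff that position is r. *)
Definition data_D2 {R : realType} (xh c : R) (n r : nat) : nat -> R * R :=
  fun j => if (j %% n == r.-1)%N then (xh / 2, c * xh / 2) else (xh, c * xh).

Definition mu1 {R : realType} (alpha beta xh c : R) (n j : nat) : R :=
  (sgld_mv alpha beta (sgld_eta alpha beta xh n) n (data_D1 xh c) j).1.
Definition sigma1_sq {R : realType} (alpha beta xh c : R) (n j : nat) : R :=
  (sgld_mv alpha beta (sgld_eta alpha beta xh n) n (data_D1 xh c) j).2.
Definition mu2 {R : realType} (alpha beta xh c : R) (n r j : nat) : R :=
  (sgld_mv alpha beta (sgld_eta alpha beta xh n) n (data_D2 xh c n r) j).1.
Definition sigma2_sq {R : realType} (alpha beta xh c : R) (n r j : nat) : R :=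
  (sgld_mv alpha beta (sgld_eta alpha beta xh n) n (data_D2 xh c n r) j).2.

Definition sgld_lambda {R : realType} (alpha beta xh : R) (n : nat) : R :=
  1 - sgld_eta alpha beta xh n / 2 * (alpha + n%:R * xh ^+ 2 * beta).

Definition logb {R : realType} (b y : R) : R := ln y / ln b.

Definition kdot {R : realType} (alpha beta xh : R) (n : nat) : R :=
  let lam := sgld_lambda alpha beta xh n in
  let eta := sgld_eta alpha beta xh n in
  (2 * n%:R)^-1 * logb lam ((1 + (alpha * eta)^-1 * (1 - lam ^+ 2))^-1) - 1.

From HB Require Import structures.
From mathcomp Require Import all_boot all_order all_algebra.
From mathcomp Require Import boolp classical_sets reals sequences exp.
From mathcomp Require Import ring lra.
Set Implicit Arguments. Unset Strict Implicit. Unset Printing Implicit Defensive.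
Import Order.TTheory GRing.Theory Num.Theory.
Local Open Scope ring_scope.

(* Both chains are Gaussian, so only means and variances matter.  On D1 every
   step contracts the distance from the mean to its limit mu* by the same
   factor lambda, hence mu* - mu_j = mu* lambda^j.  On D2 the factors lie in
   [lambda, lambda_hat] and lambda_hat occurs once per epoch, so
   mu* - hat mu_j >= mu* P with P >= lambda^j lambda_hat / lambda, while the
   variance is at most P^2 / alpha + S with S = eta / (1 - lambda_hat^2).
   The ratio mu*^2 (P - u)^2 / (P^2 / alpha + S), u = lambda^j, increases
   with P, so P may be replaced by u lambda_hat / lambda; the number of epochs
   ceil(kdot) + 1 is chosen so that lambda^(2n) <= Q u^2, which makes S
   comparable to the signal term and yields a bound independent of u.  The
   resulting explicit expression in alpha, n and s = x_h^2 beta is then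
   estimated with Bernoulli's inequality and exp(-x) <= 1 / (1 + x). *)

Section RealInequalities.
Variable R : realType.
Implicit Types (a x lam Q S u w : R) (k m : nat).

Lemma bernoulli_ler x m : x <= 1 -> 1 - m%:R * x <= (1 - x) ^+ m.
Proof.
move=> x1; elim: m => [|m IH]; first by rewrite mul0r subr0 expr0.
have IHx : (1 - m%:R * x) * (1 - x) <= (1 - x) ^+ m * (1 - x).
  by apply: ler_wpM2r; lra.
have sq0 : 0 <= m%:R * x ^+ 2 by apply: mulr_ge0; [exact: ler0n | exact: sqr_ge0].
rewrite exprSr -natr1; rewrite expr2 in sq0; lra.
Qed.

Lemma expRN_le_inv1D x : 0 <= x -> expR (- x) <= (1 + x)^-1.
Proof.
move=> x0; rewrite expRN lef_pV2 ?posrE ?expR_gt0 //; last lra.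
exact: expR_ge1Dx.
Qed.

Lemma absz_ceilD1_bounds x : -1 < x ->
  (0 < `|(Num.ceil x + 1)%R|)%N /\ (`|(Num.ceil x + 1)%R|%N%:R : R) < x + 2.
Proof.
move=> x1.
have c0 : (0 <= Num.ceil x)%R by rewrite ceil_ge0.
have KE : (`|(Num.ceil x + 1)%R|%N%:R : R) = (Num.ceil x)%:~R + 1.
  by rewrite natr_absz ger0_norm ?intrD // addr_ge0.
have cR : (0 : R) <= (Num.ceil x)%:~R by rewrite ler0z.
split; first by rewrite -(ltr_nat R) KE; lra.
by have := ceilB1_lt x; rewrite intrB KE; lra.
Qed.

Lemma expr_mul_le_prod (l : nat -> R) lam (r j : nat) : 0 <= lam ->
  (forall i, lam <= l i) -> (r < j)%N ->
  lam ^+ j * l r <= lam * \prod_(i < j) l i.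
Proof.
move=> lam0 hl rj.
rewrite (bigD1 (Ordinal rj)) //= mulrCA.
have -> : lam ^+ j = lam * lam ^+ #|[pred i : 'I_j | i != Ordinal rj]|.
  by rewrite cardC1 card_ord -exprS prednK //; apply: leq_ltn_trans rj.
rewrite -mulrA mulrCA; apply: ler_wpM2l => //.
rewrite mulrC; apply: ler_wpM2l; first exact: le_trans (hl r).
rewrite -prodr_const; apply: ler_prod => i _; rewrite lam0; exact: hl.
Qed.

Lemma expr_le_mul_expr_logb lam Q k m : 0 < lam < 1 -> 0 < Q ->
  k%:R <= logb lam Q^-1 + m%:R -> lam ^+ m <= Q * lam ^+ k.
Proof.
move=> /andP [lam0 lam1] Q0 hk.
have ln_lam : ln lam < 0 by apply: ln_lt0; lra.
have lamk : 0 < lam ^+ k by exact: exprn_gt0.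
rewrite -ler_ln ?posrE ?exprn_gt0 ?mulr_gt0 // lnM ?posrE // !lnXn //.
rewrite -(mulr_natr (ln lam) m) -(mulr_natr (ln lam) k).
move: hk; rewrite /logb lnV ?posrE // -lerBlDr ler_ndivlMr // mulrBl; lra.
Qed.

Lemma gap_ratio_homo a S u (t1 t2 : R) : 0 < a -> 0 <= S -> 0 < u -> u <= t1 <= t2 ->
  (t1 - u) ^+ 2 / (t1 ^+ 2 / a + S) <= (t2 - u) ^+ 2 / (t2 ^+ 2 / a + S).
Proof.
move=> a0 S0 u0 /andP [ut1 t12].
have den_gt0 t : u <= t -> 0 < t ^+ 2 / a + S.
  by move=> ut; apply: ltr_wpDr => //; apply: divr_gt0 => //; apply: exprn_gt0; lra.
rewrite ler_pdivrMr ?den_gt0 // mulrAC ler_pdivlMr ?den_gt0 //; last lra.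
have cross : (t1 - u) * t2 <= (t2 - u) * t1 by nra.
have cross2 : ((t1 - u) * t2) ^+ 2 <= ((t2 - u) * t1) ^+ 2.
  by rewrite !expr2; apply: ler_pM => //; apply: mulr_ge0; lra.
have gap2 : (t1 - u) ^+ 2 <= (t2 - u) ^+ 2 by rewrite !expr2; apply: ler_pM; lra.
have -> : (t1 - u) ^+ 2 * (t2 ^+ 2 / a + S) = a^-1 * ((t1 - u) * t2) ^+ 2 + S * (t1 - u) ^+ 2.
  by ring.
have -> : (t2 - u) ^+ 2 * (t1 ^+ 2 / a + S) = a^-1 * ((t2 - u) * t1) ^+ 2 + S * (t2 - u) ^+ 2.
  by ring.
by apply: lerD; apply: ler_wpM2l => //; rewrite invr_ge0 ltW.
Qed.

Lemma snr_lower_bound a S Q w (mus u h P m1 m2 V : R) :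
  0 < a -> 0 <= S -> 0 < u -> 1 <= h -> u * h <= P -> 0 < w -> w <= Q * u ^+ 2 ->
  0 <= mus -> mus * (P - u) <= m1 - m2 -> 0 < V -> V <= P ^+ 2 / a + S ->
  a * mus ^+ 2 * (h - 1) ^+ 2 / (h ^+ 2 + a * S * Q / w) <= (m1 - m2) ^+ 2 / V.
Proof.
move=> a0 S0 u0 h1 uhP w0 wQ mus0 hgap V0 hV.
have uuh : u <= u * h by rewrite ler_peMr //; lra.
have Q0 : 0 < Q by rewrite -(pmulr_lgt0 _ (exprn_gt0 2 u0)); lra.
have den_gt0 t : 0 < t -> 0 < t ^+ 2 / a + S.
  by move=> t0; apply: ltr_wpDr => //; apply: divr_gt0 => //; apply: exprn_gt0.
have uh0 : 0 < u * h by apply: mulr_gt0 => //; lra.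
have D0 : 0 < h ^+ 2 + a * S * Q / w.
  have : 0 <= a * S * Q / w by rewrite !mulr_ge0 ?invr_ge0 //; lra.
  have : 0 < h ^+ 2 by apply: exprn_gt0; lra.
  lra.
have Dw : 0 < h ^+ 2 * w + a * S * Q.
  have -> : h ^+ 2 * w + a * S * Q = (h ^+ 2 + a * S * Q / w) * w.
    by field; rewrite lt0r_neq0.
  exact: mulr_gt0.
have -> : a * mus ^+ 2 * (h - 1) ^+ 2 / (h ^+ 2 + a * S * Q / w)
    = mus ^+ 2 * ((u * h - u) ^+ 2 / ((u * h) ^+ 2 / a + S * Q * u ^+ 2 / w)).
  have -> : (u * h) ^+ 2 / a + S * Q * u ^+ 2 / w = u ^+ 2 / a * (h ^+ 2 + a * S * Q / w).
    by field; rewrite !lt0r_neq0.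
  by field; rewrite !lt0r_neq0.
(* [w <= Q u^2] is what makes the noise [S] comparable to the signal [u^2]. *)
have SQ : S <= S * Q * u ^+ 2 / w.
  by rewrite ler_pdivlMr // -mulrA; apply: ler_wpM2l.
apply: (@le_trans _ _ (mus ^+ 2 * ((u * h - u) ^+ 2 / ((u * h) ^+ 2 / a + S)))).
  apply: ler_wpM2l; first exact: sqr_ge0.
  apply: ler_wpM2l; first exact: sqr_ge0.
  rewrite lef_pV2 ?posrE ?den_gt0 //; last by apply: (lt_le_trans (den_gt0 _ uh0)); lra.
  lra.
apply: (@le_trans _ _ (mus ^+ 2 * ((P - u) ^+ 2 / (P ^+ 2 / a + S)))).
  apply: ler_wpM2l; first exact: sqr_ge0.
  apply: gap_ratio_homo => //; lra.
rewrite mulrA -exprMn; apply: ler_pM.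
- exact: sqr_ge0.
- by rewrite invr_ge0 ltW // den_gt0 //; lra.
- by rewrite !expr2; apply: ler_pM => //; apply: mulr_ge0; lra.
- by rewrite lef_pV2 ?posrE ?den_gt0 //; lra.
Qed.

End RealInequalities.

Section SGLDRecursion.
Variables (R : realType) (alpha beta eta : R) (n : nat) (data : nat -> R * R).
Local Notation mv := (sgld_mv alpha beta eta n data).

Definition sgld_factor (i : nat) : R :=
  1 - eta / 2 * (alpha + n%:R * beta * (data i).1 ^+ 2).

Lemma sgld_var_gt0 j : 0 < alpha -> 0 < eta -> 0 < (mv j).2.
Proof.
move=> alpha0 eta0; elim: j => [|j IH] /=; first by rewrite invr_gt0.
by apply: ltr_wpDl => //; apply: mulr_ge0; [exact: sqr_ge0 | exact: ltW].
Qed.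

Lemma sgld_var_le (lamh : R) j : 0 < alpha -> 0 <= eta -> 0 <= lamh < 1 ->
  (forall i, 0 <= sgld_factor i <= lamh) ->
  (mv j).2 <= (\prod_(i < j) sgld_factor i) ^+ 2 / alpha + eta / (1 - lamh ^+ 2).
Proof.
move=> alpha0 eta0 /andP [lamh0 lamh1] hl.
have lamh2 : 0 < 1 - lamh ^+ 2 by rewrite subr_gt0 expr2; nra.
set S := eta / (1 - lamh ^+ 2).
have S_fix : lamh ^+ 2 * S + eta = S by rewrite /S; field; rewrite lt0r_neq0.
elim: j => [|j IH]; first by rewrite big_ord0 expr1n mul1r /= lerDl divr_ge0 // ltW.
rewrite big_ord_recr /= -/(sgld_factor j).
have /andP [l0 l1] := hl j.
set P := \prod_(i < j) _; set l := sgld_factor j.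
have l2 : l ^+ 2 <= lamh ^+ 2 by rewrite !expr2; apply: ler_pM.
have IHl := ler_wpM2l (sqr_ge0 l) IH.
have SlS : l ^+ 2 * S <= lamh ^+ 2 * S by apply: ler_wpM2r => //; rewrite divr_ge0 // ltW.
have -> : (P * l) ^+ 2 / alpha + S = l ^+ 2 * (P ^+ 2 / alpha + S) + (S - l ^+ 2 * S) by ring.
move: IHl; rewrite -/P; lra.
Qed.

Variables (xh c : R).
Local Notation L := (alpha + n%:R * xh ^+ 2 * beta).

(* The fixed point of the mean recursion on [data_D1 xh c]. *)
Definition mu_limit : R := n%:R * xh ^+ 2 * beta * c / L.

Hypothesis data_on_line : forall i, (data i).2 = c * (data i).1.

Lemma sgld_mean_step j : L != 0 ->
  mu_limit - (mv j.+1).1 = sgld_factor j * (mu_limit - (mv j).1)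
    + eta / 2 * (alpha * c / L) * (n%:R * beta * (xh ^+ 2 - (data j).1 ^+ 2)).
Proof. by move=> L0; rewrite /= data_on_line /sgld_factor /mu_limit; field. Qed.

Lemma sgld_mean_gap_ge j : 0 <= alpha -> 0 <= eta -> 0 <= c -> 0 <= beta -> 0 < L ->
  (forall i, (data i).1 ^+ 2 <= xh ^+ 2) -> (forall i, 0 <= sgld_factor i) ->
  mu_limit * \prod_(i < j) sgld_factor i <= mu_limit - (mv j).1.
Proof.
move=> alpha0 eta0 c0 beta0 L0 hx hl.
elim: j => [|j IH]; first by rewrite big_ord0 mulr1 /= subr0.
rewrite big_ord_recr /= sgld_mean_step ?lt0r_neq0 // mulrA mulrC.
rewrite -[X in X <= _]addr0; apply: lerD; first exact: ler_wpM2l.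
by rewrite !mulr_ge0 ?divr_ge0 ?subr_ge0 ?ler0n ?hx ?invr_ge0 // ltW.
Qed.

Lemma sgld_mean_gap_eq j : L != 0 -> (forall i, (data i).1 = xh) ->
  mu_limit - (mv j).1 = mu_limit * \prod_(i < j) sgld_factor i.
Proof.
move=> L0 hx; elim: j => [|j IH]; first by rewrite big_ord0 mulr1 /= subr0.
rewrite sgld_mean_step // IH hx subrr !mulr0 addr0 big_ord_recr /=.
by rewrite mulrCA [_ * sgld_factor j]mulrC.
Qed.

End SGLDRecursion.

Section ExplicitEstimate.
Variables (R : realType) (a s nn c p L lh w : R).

(* In the notation of [snr_lower_bound], [H] is [h - 1] and [T] is [a S Q / w]. *)
Local Notation H := (3 * p / (4 * L * (L - 1))).
Local Notation T := ((2 * a + 2 * L - 1) / ((a + p / 4) * (1 + lh) * w)).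

Lemma target_le_rat : 0 < a -> 3 < s -> 0 < nn ->
  expR (- (2 / s)) * (a / Num.max 6 (1 + 2 * expR s^-1)) * (3 / (32 * s)) ^+ 2 * (c / nn) ^+ 2
  <= 9 * a * c ^+ 2 / (6144 * nn ^+ 2 * s * (s + 2)).
Proof.
move=> a0 s3 nn0.
have hE : expR (- (2 / s)) <= s / (s + 2).
  have -> : s / (s + 2) = (1 + 2 / s)^-1 by field; apply/andP; split; apply/eqP; lra.
  by apply: expRN_le_inv1D; apply: divr_ge0; lra.
have max6 : 6 <= Num.max 6 (1 + 2 * expR s^-1) by rewrite le_max lexx.
have hM : a / Num.max 6 (1 + 2 * expR s^-1) <= a / 6.
  by apply: ler_wpM2l; [lra | rewrite lef_pV2 ?posrE //; lra].
apply: (@le_trans _ _ (s / (s + 2) * (a / 6) * (3 / (32 * s)) ^+ 2 * (c / nn) ^+ 2)).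
  do 2 (apply: ler_wpM2r; first exact: sqr_ge0).
  apply: ler_pM => //; first exact: expR_ge0.
  by apply: divr_ge0; lra.
by rewrite le_eqVlt; apply/orP; left; apply/eqP; field; apply/and3P; split; apply/eqP; lra.
Qed.

Lemma snr_num_ge : 0 < a -> 0 < p -> 6 < L -> p = nn * s ->
  9 * a * c ^+ 2 * (p / L) ^+ 6 / (16 * nn ^+ 2 * s ^+ 2) <= a * (p * c / L) ^+ 2 * H ^+ 2.
Proof.
move=> a0 p0 L6 pE.
have L2 : 0 < L ^+ 2 by apply: exprn_gt0; lra.
have H_ge : 3 * p / (4 * L ^+ 2) <= H.
  rewrite -subr_ge0.
  have -> : H - 3 * p / (4 * L ^+ 2) = 3 * p / (4 * L ^+ 2 * (L - 1)).
    by field; apply/andP; split; apply/eqP; lra.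
  by apply: divr_ge0; [lra | apply: mulr_ge0; [apply: mulr_ge0; lra | lra]].
have H0 : 0 <= 3 * p / (4 * L ^+ 2) by apply: divr_ge0; [lra | apply: mulr_ge0; lra].
apply: (@le_trans _ _ (a * (p * c / L) ^+ 2 * (3 * p / (4 * L ^+ 2)) ^+ 2)).
  rewrite le_eqVlt; apply/orP; left; apply/eqP.
  have : nn * s != 0 by rewrite -pE lt0r_neq0.
  rewrite mulf_eq0 negb_or => /andP [nn0 s0].
  by rewrite pE; field; apply/and3P; split => //; apply/eqP; lra.
apply: ler_wpM2l; first by apply: mulr_ge0; [lra | exact: sqr_ge0].
by rewrite !expr2; apply: ler_pM.
Qed.

Lemma sqr_1DH_le : 0 <= p <= L -> 6 < L -> (1 + H) ^+ 2 <= 4 / 3.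
Proof.
move=> /andP [p0 pL] L6.
have H0 : 0 <= H by apply: divr_ge0; [lra | apply: mulr_ge0; [apply: mulr_ge0|]; lra].
have H1 : H <= 3 / 20.
  rewrite ler_pdivrMr; last by apply: mulr_gt0; [apply: mulr_gt0|]; lra.
  have : 0 <= (L - 6) * L by apply: mulr_ge0; lra.
  lra.
move: H0 H1; move: H => h h0 h1.
have : 0 <= h * (3 / 20 - h) by apply: mulr_ge0; lra.
rewrite expr2; lra.
Qed.

Lemma noise_le_small_a : 0 < a -> 3 < s -> 0 < nn -> p = nn * s -> L = a + p ->
  5 / 6 <= lh -> 1 - 2 * nn / L <= w -> a <= p / 2 -> T <= 144 / 11.
Proof.
move=> a0 s3 nn0 pE LE lh_ge w_ge ap.
have p0 : 0 < p by rewrite pE; apply: mulr_gt0; lra.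
have w_ge3 : 1 / 3 <= w.
  apply: le_trans w_ge; suff : 2 * nn / L <= 2 / 3 by lra.
  by rewrite ler_pdivrMr; [rewrite LE pE; nra | lra].
have den_ge : (a + p / 4) * (11 / 6) * (1 / 3) <= (a + p / 4) * (1 + lh) * w.
  by apply: ler_pM; [|lra|apply: ler_pM|]; lra.
rewrite ler_pdivrMr; last by apply: mulr_gt0; [apply: mulr_gt0|]; lra.
rewrite LE in den_ge *; lra.
Qed.

Lemma noise_le_large_a : 0 < a -> 3 < s -> 0 < nn -> p = nn * s -> L = a + p ->
  5 / 6 <= lh -> 1 - 2 * nn / L <= w -> p / 2 <= a -> T <= 96 * s / (11 * (3 * s - 4)).
Proof.
move=> a0 s3 nn0 pE LE lh_ge w_ge ap.
have p0 : 0 < p by rewrite pE; apply: mulr_gt0; lra.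
have w_ge' : (3 * s - 4) / (3 * s) <= w.
  apply: le_trans w_ge; rewrite ler_pdivrMr; last lra.
  have -> : (1 - 2 * nn / L) * (3 * s) = 3 * s - 6 * p / L.
    by rewrite pE; field; apply/eqP; lra.
  suff : 6 * p / L <= 4 by lra.
  by rewrite ler_pdivrMr; [rewrite LE; lra | lra].
have v0 : 0 < (3 * s - 4) / (3 * s) by apply: divr_gt0; lra.
have den_ge : (a + p / 4) * (11 / 6) * ((3 * s - 4) / (3 * s)) <= (a + p / 4) * (1 + lh) * w.
  by apply: ler_pM; [|lra|apply: ler_pM|]; lra.
rewrite ler_pdivrMr; last by apply: mulr_gt0; [apply: mulr_gt0|]; lra.
apply: le_trans (ler_wpM2l _ den_ge); last by apply: divr_ge0; lra.
have -> : 96 * s / (11 * (3 * s - 4)) * ((a + p / 4) * (11 / 6) * ((3 * s - 4) / (3 * s)))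
    = 16 / 3 * (a + p / 4).
  by field; apply/andP; split; apply/eqP; lra.
rewrite LE; lra.
Qed.

Lemma snr_den_le : 0 < a -> 3 < s -> 2 <= nn -> p = nn * s -> L = a + p -> a < p ->
  5 / 6 <= lh -> 1 - 2 * nn / L <= w -> (1 + H) ^+ 2 + T <= 384 * (s + 2) * (p / L) ^+ 6 / s.
Proof.
move=> a0 s3 nn2 pE LE ap lh_ge w_ge.
have p6 : 6 < p by rewrite pE; nra.
have L0 : 0 < L by lra.
have nn0 : 0 < nn by lra.
have hH : (1 + H) ^+ 2 <= 4 / 3 by apply: sqr_1DH_le; [apply/andP; split|]; lra.
have X6 (b : R) : 0 <= b -> b * L <= p -> b ^+ 6 <= (p / L) ^+ 6.
  by move=> b0 bL; apply: lerXn2r; rewrite ?nnegrE ?ler_pdivlMr //; lra.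
rewrite ler_pdivlMr; last lra.
have [ap2|ap2] := lerP a (p / 2).
- have hT := noise_le_small_a a0 s3 nn0 pE LE lh_ge w_ge ap2.
  have := X6 (2 / 3) ltac:(lra) ltac:(rewrite LE; lra).
  have -> : (2 / 3 : R) ^+ 6 = 64 / 729 by rewrite !exprS expr0; lra.
  nra.
- have hT := noise_le_large_a a0 s3 nn0 pE LE lh_ge w_ge (ltW ap2).
  have := X6 (1 / 2) ltac:(lra) ltac:(rewrite LE; lra).
  have -> : (1 / 2 : R) ^+ 6 = 1 / 64 by rewrite !exprS expr0; lra.
  have hA : 96 * s / (11 * (3 * s - 4)) <= (14 * s + 36) / (3 * s).
    rewrite ler_pdivrMr; last lra.
    rewrite mulrAC ler_pdivlMr; last lra.
    have : 3 * s <= s * s by nra.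
    nra.
  have hDs : ((1 + H) ^+ 2 + T) * s <= (4 / 3 + (14 * s + 36) / (3 * s)) * s.
    by apply: ler_wpM2r; lra.
  have e6 : (4 / 3 + (14 * s + 36) / (3 * s)) * s = 6 * (s + 2).
    by field; apply/eqP; lra.
  rewrite e6 in hDs.
  move: ((1 + H) ^+ 2 + T) ((p / L) ^+ 6) hDs => D X hDs hX.
  nra.
Qed.

Lemma target_le_snr : 0 < a -> 3 < s -> 2 <= nn -> 0 < c -> p = nn * s -> L = a + p -> a < p ->
  5 / 6 <= lh -> 1 - 2 * nn / L <= w ->
  expR (- (2 / s)) * (a / Num.max 6 (1 + 2 * expR s^-1)) * (3 / (32 * s)) ^+ 2 * (c / nn) ^+ 2
  <= a * (p * c / L) ^+ 2 * H ^+ 2 / ((1 + H) ^+ 2 + T).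
Proof.
move=> a0 s3 nn2 c0 pE LE ap lh_ge w_ge.
have p6 : 6 < p by rewrite pE; nra.
have L6 : 6 < L by lra.
have nn0 : 0 < nn by lra.
have w0 : 0 < w.
  apply: lt_le_trans w_ge; rewrite subr_gt0 ltr_pdivrMr ?LE ?pE; [nra | lra].
have H0 : 0 <= H by apply: divr_ge0; [lra | apply: mulr_ge0; [apply: mulr_ge0|]; lra].
have T0 : 0 <= T by apply: divr_ge0; [lra | apply: mulr_ge0; [apply: mulr_ge0|]; lra].
have D0 : 0 < (1 + H) ^+ 2 + T by apply: ltr_wpDr => //; apply: exprn_gt0; lra.
have X6 : 0 < (p / L) ^+ 6 by apply: exprn_gt0; apply: divr_gt0; lra.
have den_ub0 : 0 < 384 * (s + 2) * (p / L) ^+ 6 / s.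
  by apply: divr_gt0; [apply: mulr_gt0 => //; lra | lra].
apply: (le_trans (target_le_rat a0 s3 nn0)).
have -> : 9 * a * c ^+ 2 / (6144 * nn ^+ 2 * s * (s + 2)) =
    (9 * a * c ^+ 2 * (p / L) ^+ 6 / (16 * nn ^+ 2 * s ^+ 2)) / (384 * (s + 2) * (p / L) ^+ 6 / s).
  by field; do ! (apply/andP; split); apply/eqP; lra.
apply: ler_pM.
- apply: divr_ge0; first by apply: mulr_ge0; [nra | exact: ltW].
  by apply: mulr_ge0; [nra | exact: sqr_ge0].
- by rewrite invr_ge0 ltW.
- by apply: snr_num_ge; lra.
- by rewrite lef_pV2 ?posrE //; apply: snr_den_le.
Qed.

End ExplicitEstimate.

Section TwoDatabases.
Variables (R : realType) (alpha beta xh c : R) (n : nat).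

Local Notation s := (xh ^+ 2 * beta).
Local Notation p := (n%:R * s).
Local Notation L := (alpha + p).
Local Notation eta := (sgld_eta alpha beta xh n).
Local Notation lam := (sgld_lambda alpha beta xh n).
Local Notation lamh := (1 - (alpha + p / 4) / L ^+ 2).
Local Notation Q := (1 + (alpha * eta)^-1 * (1 - lam ^+ 2)).
Local Notation factor2 r := (sgld_factor alpha beta eta n (data_D2 xh c n r)).

Lemma sgld_etaE : eta = 2 / L ^+ 2.
Proof. by rewrite /sgld_eta mulrA. Qed.

Lemma sgld_lambdaE : L != 0 -> lam = 1 - L^-1.
Proof. by move=> L0; rewrite /sgld_lambda sgld_etaE -mulrA; field. Qed.

Lemma kdotE : kdot alpha beta xh n = (2 * n%:R)^-1 * logb lam Q^-1 - 1.
Proof. by []. Qed.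

Lemma mu_limitE : mu_limit alpha beta n xh c = p * c / L.
Proof. by rewrite /mu_limit !mulrA. Qed.

Lemma sgld_factor_D1 i : sgld_factor alpha beta eta n (data_D1 xh c) i = lam.
Proof. by rewrite /sgld_factor /sgld_lambda /=; congr (1 - _ * (_ + _)); ring. Qed.

Lemma sgld_factor_D2 r i : L != 0 ->
  factor2 r i = if (i %% n == r.-1)%N then lamh else lam.
Proof.
move=> L0; rewrite /sgld_factor /data_D2; case: ifP => _ /=.
  by rewrite sgld_etaE; field.
by rewrite /sgld_lambda; congr (1 - _ * (_ + _)); ring.
Qed.

Lemma data_D2_on_line r i : (data_D2 xh c n r i).2 = c * (data_D2 xh c n r i).1.
Proof. by rewrite /data_D2; case: ifP => _ //=; rewrite mulrA. Qed.

Lemma data_D2_sqr_le r i : (data_D2 xh c n r i).1 ^+ 2 <= xh ^+ 2.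
Proof.
rewrite /data_D2; case: ifP => _ //=.
have -> : (xh / 2) ^+ 2 = xh ^+ 2 / 4 by field.
by have := sqr_ge0 xh; lra.
Qed.

Lemma sgld_lambda_bounds : 0 < alpha -> 6 < p ->
  [/\ 0 < lam, lam <= lamh, lamh < 1 & 5 / 6 <= lamh].
Proof.
move=> a0 p6.
have L0 : 0 < L by lra.
have L2 : 0 < L ^+ 2 by exact: exprn_gt0.
rewrite sgld_lambdaE ?lt0r_neq0 //; split.
- by rewrite subr_gt0 invf_lt1 //; lra.
- suff : (alpha + p / 4) / L ^+ 2 <= L^-1 by lra.
  by rewrite ler_pdivrMr // (expr2 L) mulKf ?lt0r_neq0 //; lra.
- by rewrite gtrBl divr_gt0 //; lra.
- suff : (alpha + p / 4) / L ^+ 2 <= 1 / 6 by lra.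
  by rewrite ler_pdivrMr // (expr2 L); nra.
Qed.

Lemma sgld_factor_D2_bounds r i : 0 < alpha -> 6 < p -> lam <= factor2 r i <= lamh.
Proof.
move=> a0 p6; have [_ lam_le _ _] := sgld_lambda_bounds a0 p6.
rewrite sgld_factor_D2; last by rewrite lt0r_neq0 //; lra.
by case: ifP => _; rewrite ?lexx ?lam_le.
Qed.

Lemma sgld_QE : 0 < alpha -> L != 0 -> Q = 1 + (2 * L - 1) / (2 * alpha).
Proof. by move=> a0 L0; rewrite sgld_lambdaE // sgld_etaE; field; rewrite L0 lt0r_neq0. Qed.

Lemma sgld_Q_gt1 : 0 < alpha -> 6 < p -> 1 < Q.
Proof. by move=> a0 p6; rewrite sgld_QE ?lt0r_neq0 // ?ltrDl ?divr_gt0 //; lra. Qed.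

Lemma noise_termE : 0 < alpha -> 6 < p ->
  alpha * (eta / (1 - lamh ^+ 2)) * Q = (2 * alpha + 2 * L - 1) / ((alpha + p / 4) * (1 + lamh)).
Proof.
move=> a0 p6.
have L0 : L != 0 by rewrite lt0r_neq0 //; lra.
have [_ _ _ lamh56] := sgld_lambda_bounds a0 p6.
have -> : 1 - lamh ^+ 2 = (alpha + p / 4) / L ^+ 2 * (1 + lamh) by ring.
rewrite sgld_QE // sgld_etaE.
have : 1 + lamh != 0 by rewrite lt0r_neq0 //; lra.
move: (1 + lamh) => t t0.
by field; rewrite L0 t0 !lt0r_neq0 //; lra.
Qed.

Lemma rel_gapE : 6 < L -> lamh / lam - 1 = 3 * p / (4 * L * (L - 1)).
Proof.
move=> L6; rewrite sgld_lambdaE ?lt0r_neq0 //; last lra.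
by field; rewrite !lt0r_neq0 //; lra.
Qed.

Lemma sgld_lambda_expr_ge : 6 < L -> 1 - 2 * n%:R / L <= lam ^+ (2 * n).
Proof.
move=> L6; have := @bernoulli_ler _ L^-1 (2 * n) ltac:(rewrite invf_le1; lra).
by rewrite sgld_lambdaE ?lt0r_neq0 ?natrM //; lra.
Qed.

Lemma kdot_gt_m1 : 0 < alpha -> (0 < n)%N -> 6 < p -> -1 < kdot alpha beta xh n.
Proof.
move=> a0 n0 p6.
have [lam0 lam_le lamh1 _] := sgld_lambda_bounds a0 p6.
have ln_lam : ln lam < 0 by apply: ln_lt0; lra.
have ln_Q : 0 < ln Q by apply: ln_gt0; apply: sgld_Q_gt1.
rewrite kdotE; suff : 0 < (2 * n%:R)^-1 * logb lam Q^-1 by lra.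
rewrite /logb lnV ?posrE; last by have := sgld_Q_gt1 a0 p6; lra.
apply: mulr_gt0; first by rewrite invr_gt0 mulr_gt0 // ltr0n.
by rewrite mulNr -mulrN -invrN divr_gt0 // oppr_gt0.
Qed.

Lemma sgld_lambda_expr_le_Q K : 0 < alpha -> (0 < n)%N -> 6 < p ->
  K%:R <= kdot alpha beta xh n + 2 -> lam ^+ (2 * n) <= Q * (lam ^+ (K * n)) ^+ 2.
Proof.
move=> a0 n0 p6 hK.
have [lam0 lam_le lamh1 _] := sgld_lambda_bounds a0 p6.
have Q1 := sgld_Q_gt1 a0 p6.
rewrite -exprM; apply: expr_le_mul_expr_logb; rewrite ?lam0 //; try lra.
move: hK; rewrite kdotE !natrM; set lb := logb lam Q^-1 => hK.
have n2 : (0 : R) < 2 * n%:R by rewrite mulr_gt0 // ltr0n.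
have := ler_wpM2r (ltW n2) hK.
have -> : ((2 * n%:R)^-1 * lb - 1 + 2) * (2 * n%:R) = lb + 2 * n%:R.
  by field; rewrite pnatr_eq0 -lt0n.
lra.
Qed.

Lemma prod_factor_D2_ge r K : 0 < alpha -> 6 < p -> (1 <= r <= n)%N -> (0 < K)%N ->
  lam ^+ (K * n) * (lamh / lam) <= \prod_(i < K * n) factor2 r i.
Proof.
move=> a0 p6 /andP [r1 rn] K0.
have [lam0 _ _ _] := sgld_lambda_bounds a0 p6.
have rKn : (r.-1 < K * n)%N by rewrite (leq_trans _ (leq_pmull n K0)) // prednK.
have f2r : factor2 r r.-1 = lamh.
  by rewrite sgld_factor_D2 ?modn_small ?eqxx ?prednK // lt0r_neq0 //; lra.
rewrite (mulrA (lam ^+ _)) ler_pdivrMr // [_ * lam]mulrC -f2r.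
apply: expr_mul_le_prod (ltW lam0) _ rKn => i.
by case/andP: (sgld_factor_D2_bounds r i a0 p6).
Qed.

Lemma sgld_mean_D1 j : 0 < alpha -> 6 < p ->
  mu1 alpha beta xh c n j = mu_limit alpha beta n xh c * (1 - lam ^+ j).
Proof.
move=> a0 p6.
have L0 : alpha + n%:R * xh ^+ 2 * beta != 0 by rewrite -mulrA lt0r_neq0 //; lra.
have := @sgld_mean_gap_eq _ alpha beta eta n (data_D1 xh c) xh c (fun=> erefl) j L0 (fun=> erefl).
rewrite (eq_bigr (fun _ => lam)) ?prodr_const ?card_ord => [mE|i _]; last exact: sgld_factor_D1.
by rewrite /mu1 mulrBr mulr1 -mE opprB addrC subrK.
Qed.

Lemma sgld_mean_D2_ge r j : 0 < alpha -> 0 < beta -> 0 < c -> 6 < p ->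
  mu_limit alpha beta n xh c * \prod_(i < j) factor2 r i
    <= mu_limit alpha beta n xh c - mu2 alpha beta xh c n r j.
Proof.
move=> a0 b0 c0 p6; have [lam0 _ _ _] := sgld_lambda_bounds a0 p6.
apply: sgld_mean_gap_ge; rewrite ?ltW //.
- exact: data_D2_on_line.
- by rewrite sgld_etaE divr_gt0 // exprn_gt0 //; lra.
- by rewrite -mulrA; lra.
- exact: data_D2_sqr_le.
- by move=> i; case/andP: (sgld_factor_D2_bounds r i a0 p6) => + _; apply: le_trans; exact: ltW.
Qed.

Lemma sgld_var_D2_le r j : 0 < alpha -> 6 < p ->
  sigma2_sq alpha beta xh c n r j
    <= (\prod_(i < j) factor2 r i) ^+ 2 / alpha + eta / (1 - lamh ^+ 2).
Proof.
move=> a0 p6; have [lam0 lam_le lamh1 _] := sgld_lambda_bounds a0 p6.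
apply: sgld_var_le => //.
- by rewrite sgld_etaE divr_ge0 // exprn_ge0 //; lra.
- by apply/andP; split; lra.
- move=> i; case/andP: (sgld_factor_D2_bounds r i a0 p6) => lo ->.
  by rewrite (le_trans (ltW lam0) lo).
Qed.

Lemma snr_D1_D2_ge r K : 0 < alpha -> 0 < beta -> 0 < c -> (2 <= n)%N -> 3 < s -> alpha < p ->
  (1 <= r <= n)%N -> (0 < K)%N -> K%:R <= kdot alpha beta xh n + 2 ->
  expR (- (2 / s)) * (alpha / Num.max 6 (1 + 2 * expR s^-1)) * (3 / (32 * s)) ^+ 2
      * (c / n%:R) ^+ 2
    <= (mu1 alpha beta xh c n (K * n) - mu2 alpha beta xh c n r (K * n)) ^+ 2
         / sigma2_sq alpha beta xh c n r (K * n).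
Proof.
move=> a0 b0 c0 n2 s3 ap hr K0 hK.
have p6 : 6 < p.
  have : (2 : R) <= n%:R by rewrite ler_nat.
  nra.
have [lam0 lam_le lamh1 lamh56] := sgld_lambda_bounds a0 p6.
have L6 : 6 < L by lra.
have eta0 : 0 < eta by rewrite sgld_etaE divr_gt0 // exprn_gt0 //; lra.
have S0 : 0 <= eta / (1 - lamh ^+ 2) by rewrite divr_ge0 ?ltW // subr_gt0 expr2; nra.
have h1 : 1 <= lamh / lam by rewrite ler_pdivlMr // mul1r.
have mus0 : 0 <= mu_limit alpha beta n xh c.
  by rewrite mu_limitE; apply: divr_ge0; [apply: mulr_ge0 |]; lra.
have gap : mu_limit alpha beta n xh c * (\prod_(i < K * n) factor2 r i - lam ^+ (K * n))
    <= mu1 alpha beta xh c n (K * n) - mu2 alpha beta xh c n r (K * n).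
  by have := sgld_mean_D2_ge r (K * n) a0 b0 c0 p6; rewrite sgld_mean_D1 //; lra.
have V0 : 0 < sigma2_sq alpha beta xh c n r (K * n) by apply: sgld_var_gt0.
apply: (le_trans _ (snr_lower_bound a0 S0 (exprn_gt0 _ lam0) h1
  (prod_factor_D2_ge a0 p6 hr K0) (exprn_gt0 (2 * n) lam0)
  (sgld_lambda_expr_le_Q a0 (ltnW n2) p6 hK) mus0 gap V0 (sgld_var_D2_le r (K * n) a0 p6))).
have hE : lamh / lam = 1 + 3 * p / (4 * L * (L - 1)) by rewrite -(rel_gapE L6); ring.
rewrite mu_limitE noise_termE // (rel_gapE L6) hE -[_ / _ / lam ^+ (2 * n)]mulrA -invfM.
apply: target_le_snr => //; [by rewrite ler_nat | exact: sgld_lambda_expr_ge].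
Qed.

End TwoDatabases.

Theorem lemmaA5 (R : realType) (alpha beta xh c : R) (n : nat)
  (halpha : 0 < alpha) (hbeta : 0 < beta) (hxh : 0 < xh) (hc : 0 < c)
  (hn : (2 <= n)%N)
  (hxb : 3 < xh ^+ 2 * beta)
  (hnbig : n%:R > Num.max
      ((2 * alpha * xh ^+ 2 * beta)^-1 - (xh ^+ 2 * beta)^-1)
      (Num.max (alpha / (xh ^+ 2 * beta))
         (alpha / (xh ^+ 2 * beta) * (expR (2 / (xh ^+ 2 * beta)) - 2)
          + (2 * xh ^+ 2 * beta)^-1))) :
  forall r : nat, (1 <= r <= n)%N ->
  let j := (`|(Num.ceil (kdot alpha beta xh n) + 1)%R|%N * n)%N in
  (mu1 alpha beta xh c n j - mu2 alpha beta xh c n r j) ^+ 2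
    / sigma2_sq alpha beta xh c n r j
  >= expR (- (2 / (xh ^+ 2 * beta))) * (alpha
      / Num.max 6 (1 + 2 * expR ((xh ^+ 2 * beta)^-1)))
     * (3 / (32 * xh ^+ 2 * beta)) ^+ 2 * (c / n%:R) ^+ 2.
Proof.
move=> r hr; cbv zeta.
have alpha_lt_p : alpha < n%:R * (xh ^+ 2 * beta).
  by move: hnbig; rewrite !gt_max ltr_pdivrMr ?(lt_trans _ hxb) // => /and3P [].
have p6 : 6 < n%:R * (xh ^+ 2 * beta).
  have : (2 : R) <= n%:R by rewrite ler_nat.
  nra.
have [K_gt0 K_lt] := absz_ceilD1_bounds (kdot_gt_m1 halpha (ltnW hn) p6).
rewrite -[32 * _ * beta]mulrA.
by apply: snr_D1_D2_ge => //; apply: ltW.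
Qed.
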